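(* Let $A\in\mathbb{N}^{n\times m}$ have distinct columns. For $k\in[m]$ define $$C_{\mathrm{POLY\text{-}AGE}}(A,k)=\{c\in\mathbb{R}^m:\ \mathrm{Poly}(A,c)(x)\ge 0\ \forall x\in\mathbb{R}^n,\ c_i\ge 0\ \forall i\ne k,\ c_i=0\text{ for all } i\ne k\text{ with } a_i\notin(2\mathbb{N})^n\}.$$ Then $\sum_{k=1}^m C_{\mathrm{POLY\text{-}AGE}}(A,k)=C_{\mathrm{POLY\text{-}SAGE}}(A)$.
   Context: For $A\in\mathbb{N}^{n\times m}$ with distinct columns $a_i$ and $c\in\mathbb{R}^m$, $\mathrm{Poly}(A,c)$ is the polynomial $x\mapsto\sum_{i=1}^m c_i x^{a_i}$ on $\mathbb{R}^n$; a column $a_i$ is even if $a_i\in(2\mathbb{N})^n$. $\mathrm{Sig}(A,c)$ is $x\mapsto\sum_i c_i\exp(a_i^\top x)$; $C_{\mathrm{NNS}}(A)=\{c:\mathrm{Sig}(A,c)\ge 0\text{ on }\mathbb{R}^n\}$; $C_{\mathrm{AGE}}(A,k)=\{c\in C_{\mathrm{NNS}}(A): c_i\ge 0\ \forall i\ne k\}$; $C_{\mathrm{SAGE}}(A)=\sum_k C_{\mathrm{AGE}}(A,k)$. The signomial representative of $c$ is $\hat c\in\mathbb{R}^m$ with $\hat c_i=c_i$ if $a_i$ is even and $\hat c_i=-|c_i|$ otherwise; $C_{\mathrm{POLY\text{-}SAGE}}(A)=\{c\in\mathbb{R}^m:\hat c\in C_{\mathrm{SAGE}}(A)\}$. *)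

From Stdlib Require Import Reals List Arith.
Open Scope R_scope.

(* Conventions: A : nat -> nat -> nat, A r i = entry in row r (r < n), column i (i < m).
   Vectors c : nat -> R (only indices < m matter), points x : nat -> R (only indices < n). *)

Fixpoint rsum (k : nat) (f : nat -> R) : R :=
  match k with O => 0 | S k' => rsum k' f + f k' end.

Fixpoint rprod (k : nat) (f : nat -> R) : R :=
  match k with O => 1 | S k' => rprod k' f * f k' end.

Definition distinct_cols (n m : nat) (A : nat -> nat -> nat) : Prop :=
  forall i j, (i < m)%nat -> (j < m)%nat -> i <> j ->
    exists r, (r < n)%nat /\ A r i <> A r j.

Definition Poly (n m : nat) (A : nat -> nat -> nat) (c : nat -> R) (x : nat -> R) : R :=
  rsum m (fun i => c i * rprod n (fun r => x r ^ A r i)).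

Definition Sig (n m : nat) (A : nat -> nat -> nat) (c : nat -> R) (x : nat -> R) : R :=
  rsum m (fun i => c i * exp (rsum n (fun r => INR (A r i) * x r))).

Definition even_col (n : nat) (A : nat -> nat -> nat) (i : nat) : bool :=
  forallb (fun r => Nat.even (A r i)) (seq 0 n).

Definition C_NNS (n m : nat) (A : nat -> nat -> nat) (c : nat -> R) : Prop :=
  forall x : nat -> R, 0 <= Sig n m A c x.

Definition C_AGE (n m : nat) (A : nat -> nat -> nat) (k : nat) (c : nat -> R) : Prop :=
  C_NNS n m A c /\ (forall i, (i < m)%nat -> i <> k -> 0 <= c i).

(* Minkowski sum over k in [m] (indices 0..m-1) of a family of cones *)
Definition cone_sum (m : nat) (C : nat -> (nat -> R) -> Prop) (c : nat -> R) : Prop :=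
  exists cs : nat -> nat -> R,
    (forall k, (k < m)%nat -> C k (cs k)) /\
    (forall i, (i < m)%nat -> c i = rsum m (fun k => cs k i)).

Definition C_SAGE (n m : nat) (A : nat -> nat -> nat) (c : nat -> R) : Prop :=
  cone_sum m (C_AGE n m A) c.

Definition sig_rep (n : nat) (A : nat -> nat -> nat) (c : nat -> R) : nat -> R :=
  fun i => if even_col n A i then c i else - Rabs (c i).

Definition C_POLY_SAGE (n m : nat) (A : nat -> nat -> nat) (c : nat -> R) : Prop :=
  C_SAGE n m A (sig_rep n A c).

Definition C_POLY_AGE (n m : nat) (A : nat -> nat -> nat) (k : nat) (c : nat -> R) : Prop :=
  (forall x : nat -> R, 0 <= Poly n m A c x) /\
  (forall i, (i < m)%nat -> i <> k -> 0 <= c i) /\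
  (forall i, (i < m)%nat -> i <> k -> even_col n A i = false -> c i = 0).

From Stdlib Require Import Reals List Lra Lia Classical.
Open Scope R_scope.

(* Writing c^ for the signomial representative of c: if c is a polynomial AGE vector with
   possibly negative entry at k, then c^ is a signomial AGE vector, because the odd columns
   other than k carry no coefficient and, when column k is odd, negating a coordinate of odd
   degree in it turns c_k into -c_k.  Conversely Poly(A,c)(x) >= Poly(A,c^)(|x|), which is
   nonnegative since Poly(A,c^) is Sig(A,c^) on the open orthant.  It therefore suffices to
   find a SAGE decomposition of c^ in which every odd column i is carried by the i-th AGE
   vector alone.  As c^_i <= 0, column i can be cleared in the other AGE vectors by adding
   to each of them a nonnegative multiple of the i-th one, whose i-th entry is negative. *)

Lemma rsum_ext k f g : (forall i, (i < k)%nat -> f i = g i) -> rsum k f = rsum k g.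
Proof.
  induction k as [|k IH]; simpl; intros H; [reflexivity|].
  rewrite IH by (intros; apply H; lia). now rewrite H by lia.
Qed.

Lemma rprod_ext k f g : (forall i, (i < k)%nat -> f i = g i) -> rprod k f = rprod k g.
Proof.
  induction k as [|k IH]; simpl; intros H; [reflexivity|].
  rewrite IH by (intros; apply H; lia). now rewrite H by lia.
Qed.

Lemma rsum_0 k : rsum k (fun _ => 0) = 0.
Proof. induction k; simpl; lra. Qed.

Lemma rsum_plus k f g : rsum k (fun i => f i + g i) = rsum k f + rsum k g.
Proof. induction k as [|k IH]; simpl; [ring|rewrite IH; ring]. Qed.

Lemma rsum_mult_l k a f : rsum k (fun i => a * f i) = a * rsum k f.
Proof. induction k as [|k IH]; simpl; [ring|rewrite IH; ring]. Qed.

Lemma rsum_le_compat k f g : (forall i, (i < k)%nat -> f i <= g i) -> rsum k f <= rsum k g.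
Proof.
  induction k as [|k IH]; simpl; intros H; [lra|].
  assert (rsum k f <= rsum k g) by (apply IH; intros; apply H; lia).
  assert (f k <= g k) by (apply H; lia).
  lra.
Qed.

Lemma rsum_eq_single k f i : (i < k)%nat ->
  (forall j, (j < k)%nat -> j <> i -> f j = 0) -> rsum k f = f i.
Proof.
  induction k as [|k IH]; simpl; intros Hi H; [lia|].
  destruct (Nat.eq_dec i k) as [->|Hik].
  - rewrite (rsum_ext k f (fun _ => 0)), rsum_0 by (intros; apply H; lia). ring.
  - rewrite IH by (lia || (intros; apply H; lia)).
    rewrite (H k) by lia. ring.
Qed.

Lemma rsum_split_at k f i : (i < k)%nat ->
  rsum k f = rsum k (fun j => if j =? i then 0 else f j) + f i.
Proof.
  induction k as [|k IH]; simpl; intros Hi; [lia|].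
  destruct (Nat.eq_dec i k) as [->|Hik].
  - rewrite Nat.eqb_refl, (rsum_ext k (fun j => if j =? k then 0 else f j) f); [ring|].
    intros j Hj. destruct (Nat.eqb_spec j k); [lia|reflexivity].
  - rewrite IH by lia. destruct (Nat.eqb_spec k i); [lia|ring].
Qed.

Lemma rsum_nonneg_eq_0 k f : (forall i, (i < k)%nat -> 0 <= f i) -> rsum k f <= 0 ->
  forall i, (i < k)%nat -> f i = 0.
Proof.
  induction k as [|k IH]; simpl; intros H Hs i Hi; [lia|].
  assert (0 <= rsum k f).
  { rewrite <- (rsum_0 k). apply rsum_le_compat. intros; apply H; lia. }
  assert (0 <= f k) by (apply H; lia).
  destruct (Nat.eq_dec i k) as [->|Hik]; [lra|].
  apply IH; [intros; apply H; lia|lra|lia].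
Qed.

Lemma rprod_Rabs k f : rprod k (fun i => Rabs (f i)) = Rabs (rprod k f).
Proof.
  induction k as [|k IH]; simpl; [now rewrite Rabs_R1|].
  now rewrite IH, Rabs_mult.
Qed.

Lemma exp_rsum k f : exp (rsum k f) = rprod k (fun r => exp (f r)).
Proof. induction k as [|k IH]; simpl; [apply exp_0|now rewrite exp_plus, IH]. Qed.

Lemma exp_INR_mult a y : exp (INR a * y) = exp y ^ a.
Proof.
  rewrite <- Rpower_pow by apply exp_pos. unfold Rpower.
  rewrite ln_exp. f_equal; ring.
Qed.

Lemma pow_neg1_even a : Nat.even a = true -> (-1) ^ a = 1.
Proof. intros H. apply Nat.even_spec in H as [k ->]. apply pow_1_even. Qed.

Lemma pow_neg1_odd a : Nat.even a = false -> (-1) ^ a = -1.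
Proof.
  intros H. assert (Hodd : Nat.odd a = true) by now rewrite <- Nat.negb_even, H.
  apply Nat.odd_spec in Hodd as [k ->]. rewrite Nat.add_1_r. apply pow_1_odd.
Qed.

Lemma pow_Rabs_even x a : Nat.even a = true -> x ^ a = Rabs x ^ a.
Proof.
  intros H. apply Nat.even_spec in H as [k ->].
  rewrite !pow_mult, RPow_abs, (Rabs_right (x ^ 2)); [reflexivity|].
  apply Rle_ge, pow2_ge_0.
Qed.

Lemma continuity_pt_pow f a x : continuity_pt f x -> continuity_pt (fun t => f t ^ a) x.
Proof.
  intros Hf. induction a as [|a IH]; simpl.
  - now apply continuity_pt_const.
  - exact (continuity_pt_mult f (fun t => f t ^ a) x Hf IH).
Qed.

Lemma continuity_pt_rprod k (f : nat -> R -> R) x : (forall i, continuity_pt (f i) x) ->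
  continuity_pt (fun t => rprod k (fun i => f i t)) x.
Proof.
  intros H. induction k as [|k IH]; simpl.
  - now apply continuity_pt_const.
  - exact (continuity_pt_mult (fun t => rprod k (fun i => f i t)) (f k) x IH (H k)).
Qed.

Lemma continuity_pt_rsum k (f : nat -> R -> R) x : (forall i, continuity_pt (f i) x) ->
  continuity_pt (fun t => rsum k (fun i => f i t)) x.
Proof.
  intros H. induction k as [|k IH]; simpl.
  - now apply continuity_pt_const.
  - exact (continuity_pt_plus (fun t => rsum k (fun i => f i t)) (f k) x IH (H k)).
Qed.

Lemma continuity_pt_nonneg_0 g : continuity_pt g 0 -> (forall t, 0 < t -> 0 <= g t) -> 0 <= g 0.
Proof.
  intros Hc Hpos. destruct (Rle_lt_dec 0 (g 0)) as [|Hneg]; [assumption|exfalso].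
  destruct (Hc (- g 0) ltac:(lra)) as [delta [Hdelta Hclose]].
  assert (Hnear : Rabs (g (delta / 2) - g 0) < - g 0).
  { apply Hclose. split; [split; [exact I|lra]|].
    simpl; unfold R_dist. rewrite Rminus_0_r, Rabs_right; lra. }
  assert (0 <= g (delta / 2)) by (apply Hpos; lra).
  pose proof (RRle_abs (g (delta / 2) - g 0)). lra.
Qed.

Lemma even_col_true n A i : even_col n A i = true ->
  forall r, (r < n)%nat -> Nat.even (A r i) = true.
Proof.
  unfold even_col. rewrite forallb_forall. intros H r Hr. apply H, in_seq. lia.
Qed.

Lemma even_col_false n A i : even_col n A i = false ->
  exists r, (r < n)%nat /\ Nat.even (A r i) = false.
Proof.
  intros H. apply NNPP. intros Hnone.
  assert (forallb (fun r => Nat.even (A r i)) (seq 0 n) = true); [|unfold even_col in H; congruence].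
  apply forallb_forall. intros r Hr. apply in_seq in Hr.
  destruct (Nat.even (A r i)) eqn:E; [reflexivity|].
  exfalso. apply Hnone. exists r. split; [lia|exact E].
Qed.

Lemma rprod_flip_pow k r0 (a : nat -> nat) (e : nat -> R) : (r0 < k)%nat ->
  rprod k (fun r => (if r =? r0 then - e r else e r) ^ a r) =
  (-1) ^ a r0 * rprod k (fun r => e r ^ a r).
Proof.
  induction k as [|k IH]; simpl; intros Hr0; [lia|].
  destruct (Nat.eq_dec r0 k) as [->|Hne].
  - rewrite Nat.eqb_refl, (rprod_ext k _ (fun r => e r ^ a r)).
    + replace (- e k) with (-1 * e k) by ring. rewrite Rpow_mult_distr. ring.
    + intros r Hr. destruct (Nat.eqb_spec r k); [lia|reflexivity].
  - rewrite IH by lia. destruct (Nat.eqb_spec k r0); [lia|ring].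
Qed.

Section Cones.

Variables (n m : nat) (A : nat -> nat -> nat).

Lemma Sig_ext c d y : (forall i, (i < m)%nat -> c i = d i) -> Sig n m A c y = Sig n m A d y.
Proof. intros H. apply rsum_ext. intros i Hi. now rewrite H. Qed.

Lemma Sig_plus_scal c d t y :
  Sig n m A (fun i => c i + t * d i) y = Sig n m A c y + t * Sig n m A d y.
Proof. unfold Sig. rewrite <- rsum_mult_l, <- rsum_plus. apply rsum_ext. intros; ring. Qed.

Lemma Poly_ext_pt c x x' : (forall r, (r < n)%nat -> x r = x' r) ->
  Poly n m A c x = Poly n m A c x'.
Proof. intros H. apply rsum_ext. intros i Hi. f_equal. apply rprod_ext. intros r Hr. now rewrite H. Qed.

Lemma Poly_exp c y : Poly n m A c (fun r => exp (y r)) = Sig n m A c y.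
Proof.
  apply rsum_ext. intros i Hi. f_equal.
  rewrite exp_rsum. apply rprod_ext. intros r Hr. now rewrite exp_INR_mult.
Qed.

Lemma Poly_flip c x r0 : (r0 < n)%nat ->
  Poly n m A c (fun r => if r =? r0 then - x r else x r) =
  Poly n m A (fun i => (-1) ^ A r0 i * c i) x.
Proof. intros Hr0. apply rsum_ext. intros i Hi. rewrite rprod_flip_pow by exact Hr0. ring. Qed.

Lemma C_NNS_of_Poly_nonneg c : (forall x, 0 <= Poly n m A c x) -> C_NNS n m A c.
Proof. intros H y. rewrite <- Poly_exp. apply H. Qed.

Lemma C_NNS_plus_scal c d t : C_NNS n m A c -> C_NNS n m A d -> 0 <= t ->
  C_NNS n m A (fun i => c i + t * d i).
Proof.
  intros Hc Hd Ht y. rewrite Sig_plus_scal.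
  pose proof (Hc y). pose proof (Hd y). nra.
Qed.

(* Positive points are exponentials, and the boundary of the orthant is reached by continuity. *)
Lemma Poly_nonneg_orthant d : C_NNS n m A d ->
  forall z, (forall r, (r < n)%nat -> 0 <= z r) -> 0 <= Poly n m A d z.
Proof.
  intros Hd z Hz.
  set (g := fun t => Poly n m A d (fun r => z r + t)).
  replace (Poly n m A d z) with (g 0)
    by (apply Poly_ext_pt; intros; ring).
  apply continuity_pt_nonneg_0.
  - apply continuity_pt_rsum. intros i.
    apply (continuity_pt_mult (fun _ => d i) (fun t => rprod n (fun r => (z r + t) ^ A r i))).
    { now apply continuity_pt_const. }
    apply (continuity_pt_rprod n (fun r t => (z r + t) ^ A r i)). intros r.
    apply (continuity_pt_pow (fun t => z r + t)).
    apply (continuity_pt_plus (fun _ => z r) id).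
    + now apply continuity_pt_const.
    + apply derivable_continuous_pt, derivable_pt_id.
  - intros t Ht. unfold g.
    rewrite (Poly_ext_pt d (fun r => z r + t) (fun r => exp (ln (z r + t)))), Poly_exp.
    + apply Hd.
    + intros r Hr. specialize (Hz r Hr). rewrite exp_ln by lra. reflexivity.
Qed.

Lemma Poly_sig_rep_Rabs_le c x :
  Poly n m A (sig_rep n A c) (fun r => Rabs (x r)) <= Poly n m A c x.
Proof.
  apply rsum_le_compat. intros i Hi. unfold sig_rep.
  destruct (even_col n A i) eqn:E.
  - right. f_equal. apply rprod_ext. intros r Hr.
    symmetry. apply pow_Rabs_even, (even_col_true n A i E r Hr).
  - rewrite (rprod_ext n _ (fun r => Rabs (x r ^ A r i))) by (intros; apply RPow_abs).
    rewrite rprod_Rabs, Ropp_mult_distr_l_reverse, <- Rabs_mult.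
    pose proof (Rabs_Ropp (c i * rprod n (fun r => x r ^ A r i))).
    pose proof (RRle_abs (- (c i * rprod n (fun r => x r ^ A r i)))).
    lra.
Qed.

Lemma Poly_nonneg_of_C_NNS_sig_rep c : C_NNS n m A (sig_rep n A c) ->
  forall x, 0 <= Poly n m A c x.
Proof.
  intros H x. eapply Rle_trans; [|apply Poly_sig_rep_Rabs_le].
  apply Poly_nonneg_orthant; [exact H|]. intros; apply Rabs_pos.
Qed.

Lemma sig_rep_off_diag k c : C_POLY_AGE n m A k c ->
  forall i, (i < m)%nat -> i <> k -> sig_rep n A c i = c i.
Proof.
  intros [_ [_ Hodd]] i Hi Hik. unfold sig_rep.
  destruct (even_col n A i) eqn:E; [reflexivity|].
  rewrite (Hodd i Hi Hik E), Rabs_R0. ring.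
Qed.

Lemma C_NNS_sig_rep_of_C_POLY_AGE k c : C_POLY_AGE n m A k c -> C_NNS n m A (sig_rep n A c).
Proof.
  intros Hc. pose proof Hc as [Hpoly [_ Hodd]].
  assert (Hc_nns : C_NNS n m A c) by now apply C_NNS_of_Poly_nonneg.
  destruct (even_col n A k) eqn:Ek.
  - intros y. rewrite (Sig_ext _ c); [apply Hc_nns|].
    intros i Hi. destruct (Nat.eq_dec i k) as [->|Hik].
    + unfold sig_rep. now rewrite Ek.
    + now apply (sig_rep_off_diag k).
  - (* Negating a coordinate of odd degree in column k flips the sign of c k only. *)
    destruct (even_col_false n A k Ek) as [r0 [Hr0 Hodd_r0]].
    set (c' := fun i => (-1) ^ A r0 i * c i).
    assert (Hc'_nns : C_NNS n m A c').
    { apply C_NNS_of_Poly_nonneg. intros x. unfold c'. rewrite <- Poly_flip by exact Hr0. apply Hpoly. }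
    assert (Hc'_off : forall i, (i < m)%nat -> i <> k -> c' i = c i).
    { intros i Hi Hik. unfold c'. destruct (even_col n A i) eqn:E.
      - rewrite pow_neg1_even by exact (even_col_true n A i E r0 Hr0). ring.
      - rewrite (Hodd i Hi Hik E). ring. }
    intros y. destruct (Rle_lt_dec 0 (c k)) as [Hck|Hck].
    + rewrite (Sig_ext _ c'); [apply Hc'_nns|].
      intros i Hi. destruct (Nat.eq_dec i k) as [->|Hik].
      * unfold sig_rep, c'. rewrite Ek, pow_neg1_odd, Rabs_right by (assumption || lra). ring.
      * rewrite Hc'_off by assumption. now apply (sig_rep_off_diag k).
    + rewrite (Sig_ext _ c); [apply Hc_nns|].
      intros i Hi. destruct (Nat.eq_dec i k) as [->|Hik].
      * unfold sig_rep. rewrite Ek, Rabs_left by lra. ring.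
      * now apply (sig_rep_off_diag k).
Qed.

Lemma C_AGE_of_C_POLY_AGE k c : C_POLY_AGE n m A k c -> C_AGE n m A k (sig_rep n A c).
Proof.
  intros Hc. split; [now apply (C_NNS_sig_rep_of_C_POLY_AGE k)|].
  intros i Hi Hik. rewrite (sig_rep_off_diag k c Hc i Hi Hik). now apply Hc.
Qed.

Lemma C_AGE_ext k a b : (forall j, (j < m)%nat -> a j = b j) -> C_AGE n m A k a -> C_AGE n m A k b.
Proof.
  intros Hab [Hnns Hpos]. split.
  - intros y. rewrite <- (Sig_ext a b y Hab). apply Hnns.
  - intros j Hj Hjk. rewrite <- Hab by exact Hj. now apply Hpos.
Qed.

Lemma C_AGE_scal k a t : 0 <= t -> C_AGE n m A k a -> C_AGE n m A k (fun j => t * a j).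
Proof.
  intros Ht [Hnns Hpos]. split.
  - intros y. unfold Sig.
    rewrite (rsum_ext m _ (fun i => t * (a i * exp (rsum n (fun r => INR (A r i) * y r)))))
      by (intros; ring).
    rewrite rsum_mult_l. apply Rmult_le_pos; [exact Ht|apply Hnns].
  - intros j Hj Hjk. apply Rmult_le_pos; [exact Ht|now apply Hpos].
Qed.

Lemma C_AGE_plus_scal k i a b t : k <> i -> C_AGE n m A k a -> C_AGE n m A i b -> 0 <= t ->
  0 <= a i + t * b i -> C_AGE n m A k (fun j => a j + t * b j).
Proof.
  intros Hki [Ha_nns Ha_pos] [Hb_nns Hb_pos] Ht Hi. split.
  - now apply C_NNS_plus_scal.
  - intros j Hj Hjk. destruct (Nat.eq_dec j i) as [->|Hji]; [exact Hi|].
    pose proof (Ha_pos j Hj Hjk). pose proof (Hb_pos j Hj Hji). nra.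
Qed.

Definition age_decomposition (d : nat -> nat -> R) (c : nat -> R) : Prop :=
  (forall k, (k < m)%nat -> C_AGE n m A k (d k)) /\
  (forall i, (i < m)%nat -> c i = rsum m (fun k => d k i)).

Definition concentrated (d : nat -> nat -> R) (i : nat) : Prop :=
  forall k, (k < m)%nat -> k <> i -> d k i = 0.

Lemma age_decomposition_shift d c i u : age_decomposition d c -> (i < m)%nat ->
  rsum m u = 0 -> 0 <= 1 + u i ->
  (forall k, (k < m)%nat -> k <> i -> 0 <= u k /\ 0 <= d k i + u k * d i i) ->
  age_decomposition (fun k j => d k j + u k * d i j) c.
Proof.
  intros [Hage Hsum] Hi Hu0 Hui Huk. split.
  - intros k Hk. destruct (Nat.eq_dec k i) as [->|Hki].
    + apply (C_AGE_ext i (fun j => (1 + u i) * d i j)); [intros; ring|].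
      now apply C_AGE_scal, Hage.
    + destruct (Huk k Hk Hki). now apply (C_AGE_plus_scal k i); auto.
  - intros j Hj. rewrite rsum_plus, <- Hsum by exact Hj.
    rewrite (rsum_ext m _ (fun k => d i j * u k)) by (intros; ring).
    rewrite rsum_mult_l, Hu0. ring.
Qed.

Lemma age_decomposition_concentrate d c i : age_decomposition d c -> (i < m)%nat -> c i <= 0 ->
  exists d', age_decomposition d' c /\ concentrated d' i /\
    (forall j, j <> i -> concentrated d j -> concentrated d' j).
Proof.
  intros Hd Hi Hci. pose proof Hd as [Hage Hsum].
  set (off := rsum m (fun k => if k =? i then 0 else d k i)).
  assert (Hsplit : c i = off + d i i).
  { rewrite Hsum by exact Hi. exact (rsum_split_at m (fun k => d k i) i Hi). }
  assert (Hoff_terms : forall k, (k < m)%nat -> 0 <= (if k =? i then 0 else d k i)).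
  { intros k Hk. destruct (Nat.eqb_spec k i); [lra|]. now apply (Hage k Hk). }
  assert (Hoff : 0 <= off).
  { rewrite <- (rsum_0 m). now apply rsum_le_compat. }
  destruct (Rlt_le_dec (d i i) 0) as [Hneg|Hnonneg].
  - set (s := - d i i).
    set (u := fun k => if k =? i then - off / s else d k i / s).
    assert (Hcancel : forall k, k <> i -> d k i + u k * d i i = 0).
    { intros k Hki. unfold u. destruct (Nat.eqb_spec k i); [contradiction|].
      unfold s. field. lra. }
    exists (fun k j => d k j + u k * d i j). split; [|split].
    + apply age_decomposition_shift; [exact Hd|exact Hi|..].
      * rewrite (rsum_split_at m u i Hi).
        rewrite (rsum_ext m _ (fun k => / s * (if k =? i then 0 else d k i))).
        -- rewrite rsum_mult_l. fold off. unfold u. rewrite Nat.eqb_refl. field. unfold s; lra.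
        -- intros k Hk. unfold u. destruct (Nat.eqb_spec k i); [ring|]. unfold Rdiv; ring.
      * unfold u. rewrite Nat.eqb_refl.
        replace (1 + - off / s) with ((s - off) / s) by (field; unfold s; lra).
        apply Rmult_le_pos; [unfold s; lra|apply Rlt_le, Rinv_0_lt_compat; unfold s; lra].
      * intros k Hk Hki. rewrite Hcancel by exact Hki. split; [|lra].
        unfold u. destruct (Nat.eqb_spec k i); [contradiction|].
        apply Rmult_le_pos; [now apply (Hage k Hk)|apply Rlt_le, Rinv_0_lt_compat; unfold s; lra].
    + intros k Hk Hki. now apply Hcancel.
    + intros j Hji Hconc k Hk Hkj.
      rewrite (Hconc k Hk Hkj), (Hconc i Hi (not_eq_sym Hji)). ring.
  - exists d. split; [exact Hd|split; [|tauto]].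
    intros k Hk Hki.
    pose proof (rsum_nonneg_eq_0 m _ Hoff_terms ltac:(fold off; lra) k Hk) as Hk0.
    simpl in Hk0. now destruct (Nat.eqb_spec k i).
Qed.

Lemma age_decomposition_concentrate_nonpos d c : age_decomposition d c ->
  exists d', age_decomposition d' c /\
    (forall i, (i < m)%nat -> c i <= 0 -> concentrated d' i).
Proof.
  intros Hd.
  assert (Hprefix : forall p, exists d', age_decomposition d' c /\
    (forall i, (i < p)%nat -> (i < m)%nat -> c i <= 0 -> concentrated d' i)).
  { induction p as [|p [d' [Hd' Hconc]]].
    - exists d. split; [exact Hd|intros; lia].
    - destruct (Nat.le_gt_cases m p) as [Hmp|Hpm].
      + exists d'. split; [exact Hd'|]. intros i Hip Him. apply Hconc; lia.
      + destruct (Rle_lt_dec (c p) 0) as [Hcp|Hcp].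
        * destruct (age_decomposition_concentrate d' c p Hd' Hpm Hcp) as [d'' [Hd'' [Hp Hkeep]]].
          exists d''. split; [exact Hd''|]. intros i Hip Him Hci.
          destruct (Nat.eq_dec i p) as [->|Hneq]; [exact Hp|].
          apply Hkeep; [exact Hneq|]. apply Hconc; [lia|exact Him|exact Hci].
        * exists d'. split; [exact Hd'|]. intros i Hip Him Hci.
          destruct (Nat.eq_dec i p) as [->|Hneq]; [lra|]. apply Hconc; [lia|exact Him|exact Hci]. }
  destruct (Hprefix m) as [d' [Hd' Hconc]].
  exists d'. split; [exact Hd'|]. intros i Hi. now apply Hconc.
Qed.

Lemma C_POLY_SAGE_of_cone_sum c : cone_sum m (C_POLY_AGE n m A) c -> C_POLY_SAGE n m A c.
Proof.
  intros [cs [Hcs Hsum]]. exists (fun k => sig_rep n A (cs k)). split.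
  - intros k Hk. now apply C_AGE_of_C_POLY_AGE, Hcs.
  - intros i Hi. unfold sig_rep. rewrite Hsum by exact Hi. destruct (even_col n A i) eqn:E.
    + reflexivity.
    + assert (Hconc : forall k, (k < m)%nat -> k <> i -> cs k i = 0)
        by (intros k Hk Hki; now apply (Hcs k Hk)).
      rewrite (rsum_eq_single m (fun k => cs k i) i Hi Hconc).
      symmetry. apply (rsum_eq_single m (fun k => - Rabs (cs k i)) i Hi).
      intros k Hk Hki. rewrite Hconc, Rabs_R0 by assumption. ring.
Qed.

Lemma cone_sum_of_concentrated_age_decomposition d c : age_decomposition d (sig_rep n A c) ->
  (forall i, (i < m)%nat -> even_col n A i = false -> concentrated d i) ->
  cone_sum m (C_POLY_AGE n m A) c.
Proof.
  intros [Hage Hsum] Hconc.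
  set (cs := fun k i => if even_col n A i then d k i else if k =? i then c i else 0).
  assert (Hrep : forall k j, (k < m)%nat -> (j < m)%nat -> sig_rep n A (cs k) j = d k j).
  { intros k j Hk Hj. unfold sig_rep, cs. destruct (even_col n A j) eqn:E; [reflexivity|].
    destruct (Nat.eqb_spec k j) as [->|Hkj].
    - pose proof (Hsum j Hj) as Hj_sum. unfold sig_rep in Hj_sum. rewrite E in Hj_sum.
      rewrite Hj_sum. exact (rsum_eq_single m (fun k => d k j) j Hj (Hconc j Hj E)).
    - rewrite Rabs_R0, (Hconc j Hj E k Hk Hkj). ring. }
  exists cs. split.
  - intros k Hk. split; [|split].
    + apply Poly_nonneg_of_C_NNS_sig_rep. intros y.
      rewrite (Sig_ext _ (d k)) by (intros; now apply Hrep). now apply Hage.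
    + intros i Hi Hik. unfold cs. destruct (even_col n A i) eqn:E.
      * now apply (Hage k Hk).
      * destruct (Nat.eqb_spec k i); [congruence|lra].
    + intros i Hi Hik E. unfold cs. rewrite E. destruct (Nat.eqb_spec k i); [congruence|reflexivity].
  - intros i Hi. unfold cs. destruct (even_col n A i) eqn:E.
    + pose proof (Hsum i Hi) as Hi_sum. unfold sig_rep in Hi_sum. now rewrite E in Hi_sum.
    + rewrite (rsum_eq_single m _ i Hi), Nat.eqb_refl; [reflexivity|].
      intros k Hk Hki. destruct (Nat.eqb_spec k i); [contradiction|reflexivity].
Qed.

End Cones.

Theorem mainTheorem16 (n m : nat) (A : nat -> nat -> nat)
  (hA : distinct_cols n m A) (c : nat -> R) :
  cone_sum m (C_POLY_AGE n m A) c <-> C_POLY_SAGE n m A c.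
Proof.
  split; [apply C_POLY_SAGE_of_cone_sum|].
  intros [d Hd].
  destruct (age_decomposition_concentrate_nonpos n m A d _ Hd) as [d' [Hd' Hconc]].
  apply (cone_sum_of_concentrated_age_decomposition n m A d' c Hd').
  intros i Hi Ei. apply Hconc; [exact Hi|].
  unfold sig_rep. rewrite Ei. pose proof (Rabs_pos (c i)). lra.
Qed.
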